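(* Assume the input embeddings $e_1,\dots,e_N$ are orthonormal, the output embeddings $u_1,\dots,u_M$ are orthonormal, and $p(x)>0$ for all $x\in[N]$. Let $\Pi$ denote the orthogonal projection of $\mathbb{R}^d$ onto $\mathrm{span}\{u_i-u_j: i,j\in[M]\}$. Then for any initialization $W_0$, the gradient flow $\dot W_t=-\nabla\mathcal{L}(W_t)$ satisfies \[ \lim_{t\to\infty}\frac{W_t}{\log t}=\kappa\sum_{x\in[N]}\Pi(u_{f^*(x)})\otimes e_x \] for some constant $\kappa>0$.
   Context: Integers $N,M\ge2$, $d\ge\max(N,M)$. Fixed embeddings $e_1,\dots,e_N,u_1,\dots,u_M\in\mathbb{R}^d$, target $f^*:[N]\to[M]$, probability distribution $p$ on $[N]$. For $W\in\mathbb{R}^{d\times d}$: $p_W(y\mid x)=\exp(u_y^\top We_x)/\sum_{z\in[M]}\exp(u_z^\top We_x)$, $\mathcal{L}(W)=-\sum_x p(x)\log p_W(f^*(x)\mid x)$. Gradients are for the Frobenius inner product; $u\otimes e:=ue^\top$. *)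

From HB Require Import structures.
From mathcomp Require Import all_boot all_order all_algebra.
From mathcomp Require Import all_classical all_reals all_analysis.
Set Implicit Arguments. Unset Strict Implicit. Unset Printing Implicit Defensive.
Import Order.TTheory GRing.Theory Num.Theory.
Import numFieldNormedType.Exports.
Local Open Scope classical_set_scope.
Local Open Scope ring_scope.

Section Defs.
Variable R : realType.

Definition dotv {d : nat} (v w : 'cV[R]_d) : R := \sum_(k < d) v k 0 * w k 0.

Definition frob {d : nat} (A B : 'M[R]_d) : R := \sum_(i < d) \sum_(j < d) A i j * B i j.

Definition tensor {d : nat} (u e : 'cV[R]_d) : 'M[R]_d := u *m e^T.

Definition orthonormal_vecs {n d : nat} (v : 'I_n -> 'cV[R]_d) : Prop :=
  forall i j, dotv (v i) (v j) = (i == j)%:R.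

Definition pW {N M d : nat} (e : 'I_N -> 'cV[R]_d) (u : 'I_M -> 'cV[R]_d)
  (W : 'M[R]_d) (y : 'I_M) (x : 'I_N) : R :=
  expR (dotv (u y) (W *m e x)) / \sum_(z < M) expR (dotv (u z) (W *m e x)).

Definition loss {N M d : nat} (e : 'I_N -> 'cV[R]_d) (u : 'I_M -> 'cV[R]_d)
  (fstar : 'I_N -> 'I_M) (p : 'I_N -> R) (W : 'M[R]_d) : R :=
  - \sum_(x < N) p x * ln (pW e u W (fstar x) x).

Definition is_gradient {d : nat} (f : 'M[R]_d -> R) (W G : 'M[R]_d) : Prop :=
  differentiable f W /\ forall V : 'M[R]_d, 'd f W V = frob G V.

Definition in_diff_span {M d : nat} (u : 'I_M -> 'cV[R]_d) (v : 'cV[R]_d) : Prop :=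
  exists c : 'I_M -> 'I_M -> R, v = \sum_(i < M) \sum_(j < M) c i j *: (u i - u j).

Definition is_orth_proj_diff_span {M d : nat} (u : 'I_M -> 'cV[R]_d)
  (Pi : 'cV[R]_d -> 'cV[R]_d) : Prop :=
  forall v, in_diff_span u (Pi v) /\
            forall w, in_diff_span u w -> dotv (v - Pi v) w = 0.

Definition is_gradient_flow {d : nat} (f : 'M[R]_d -> R) (W0 : 'M[R]_d)
  (W : R -> 'M[R]_d) : Prop :=
  W 0 = W0 /\ W x @[x --> 0^'+] --> W0 /\
  forall t : R, 0 < t -> exists G, is_gradient f (W t) G /\ is_derive t 1 W (- G).

End Defs.

(* Orthonormality decouples the dynamics: for each input x the logits
   z_y(t) = u_y^T W_t e_x follow the softmax flow
   z_y' = p(x) ([y = f*(x)] - softmax(z)_y), and the component of W_t orthogonal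
   to all u_y (x) e_x is constant, since the gradient lies in their span.
   Along the softmax flow sum_y z_y is conserved, the target probability
   increases, and the gaps between non-target logits shrink.  Hence
   E = exp(z_f - z_y), for y <> f, has derivative pinched between two
   positive constants on [1, oo), so z_f - z_y = ln t + O(1) and
   z_y = ([y = f] - 1/M) ln t + O(1).  As Pi(u_f) = u_f - (1/M) sum_y u_y,
   the theorem holds with kappa = 1. *)

From HB Require Import structures.
From mathcomp Require Import all_boot all_order all_algebra.
From mathcomp Require Import all_classical all_reals all_analysis.
From mathcomp Require Import ring lra.
Import Order.TTheory GRing.Theory Num.Theory.
Import numFieldNormedType.Exports.
Local Open Scope classical_set_scope.
Local Open Scope ring_scope.

Section RealDerivatives.
Context {R : realType}.

Lemma is_derive_sum_fun {V W : normedModType R} {n} {h : 'I_n -> V -> W}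
    {x v : V} {dh : 'I_n -> W} :
  (forall i, is_derive x v (h i) (dh i)) ->
  is_derive x v (fun t => \sum_(i < n) h i t) (\sum_(i < n) dh i).
Proof. by move=> hd; rewrite -fct_sumE; exact: is_derive_sum. Qed.

Lemma is_deriveMl (c : R) {f : R -> R} {x a : R} : is_derive x 1 f a ->
  is_derive x 1 (fun t => c * f t) (c * a).
Proof. by move=> fa; have := is_deriveZ c fa. Qed.

Lemma is_derive_affine (a b x : R) : is_derive x 1 (fun h : R => a + h * b) b.
Proof.
under [fun h => _]funext do rewrite mulrC.
apply: is_derive_eq (is_deriveD (is_derive_cst a x 1) (is_deriveZ b (is_derive_id x 1))) _.
by rewrite add0r [b *: 1]mulr1.
Qed.

Lemma is_derive_expR_comp {f : R -> R} {x a : R} : is_derive x 1 f a ->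
  is_derive x 1 (fun t => expR (f t)) (expR (f x) * a).
Proof. exact: (is_derive1_comp (is_derive_expR _)). Qed.

Lemma is_derive_ln_comp {f : R -> R} {x a : R} : 0 < f x -> is_derive x 1 f a ->
  is_derive x 1 (fun t => ln (f t)) ((f x)^-1 * a).
Proof. by move=> fx0; exact: (is_derive1_comp (is_derive1_ln fx0)). Qed.

Lemma derive_ge0_nondecreasing (h dh : R -> R) (t0 : R) :
  (forall t : R, t0 <= t -> is_derive t 1 h (dh t)) ->
  (forall t : R, t0 <= t -> 0 <= dh t) ->
  forall s t : R, t0 <= s -> s <= t -> h s <= h t.
Proof.
move=> hd dh_ge0 s t t0s st.
have hd' x : s <= x -> is_derive x 1 h (dh x) by move=> sx; apply: hd (le_trans t0s sx).
apply: (@ger0_derive1_ndecr _ h s t) => //.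
- by move=> x; rewrite in_itv /= => /andP[/ltW/hd' []].
- move=> x; rewrite in_itv /= => /andP[/ltW sx _].
  by rewrite derive1E; have [_ ->] := hd' x sx; apply: dh_ge0 (le_trans t0s sx).
- apply: continuous_in_subspaceT => x; rewrite inE /= in_itv /= => /andP[/hd' [dx _] _].
  exact/differentiable_continuous/derivable1_diffP.
Qed.

Lemma derive0_constant (h : R -> R) :
  (forall t : R, 0 < t -> is_derive t 1 h 0) ->
  forall s t : R, 0 < s -> 0 < t -> h s = h t.
Proof.
move=> hd.
suff le_h (s t : R) : 0 < s -> s <= t -> h s = h t.
  by move=> s t s0 t0; case: (leP s t) => [|/ltW] st; [|symmetry]; apply: le_h.
move=> s0 st; have hd' x : s <= x -> is_derive x 1 h 0 by move=> /(lt_le_trans s0); apply: hd.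
have hdN x : s <= x -> is_derive x 1 (fun t => - h t) 0.
  by move=> /hd'/is_deriveN; rewrite oppr0.
apply/eqP; rewrite eq_le (@derive_ge0_nondecreasing h (fun=> 0) s hd') //= -lerN2.
exact: (@derive_ge0_nondecreasing _ (fun=> 0) s hdN).
Qed.

Lemma ln_growth_linear (E dE : R -> R) (alpha beta : R) : 0 < alpha -> 0 < E 1 ->
  (forall t : R, 1 <= t -> is_derive t 1 E (dE t)) ->
  (forall t : R, 1 <= t -> alpha <= dE t <= beta) ->
  exists C, forall t : R, 1 <= t -> `|ln (E t) - ln t| <= C.
Proof.
move=> alpha0 E10 hd hdE.
have dlin (c t : R) : is_derive t 1 (fun s : R => c * s) c.
  exact: is_derive_eq (is_deriveMl c (is_derive_id t 1)) (mulr1 c).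
have lo t : 1 <= t -> E 1 - alpha <= E t - alpha * t.
  move=> t1; rewrite -[in leLHS](mulr1 alpha).
  apply: (@derive_ge0_nondecreasing (fun s => E s - alpha * s) (fun s => dE s - alpha) 1) => //.
    by move=> s s1; exact: is_deriveB (hd s s1) (dlin alpha s).
  by move=> s /hdE /andP[+ _]; rewrite subr_ge0.
have up t : 1 <= t -> beta * t - E t >= beta - E 1.
  move=> t1; rewrite -[in leLHS](mulr1 beta).
  apply: (@derive_ge0_nondecreasing (fun s => beta * s - E s) (fun s => beta - dE s) 1) => //.
    by move=> s s1; exact: is_deriveB (dlin beta s) (hd s s1).
  by move=> s /hdE /andP[_ +]; rewrite subr_ge0.
have beta0 : 0 <= beta by have /andP[+ +] := hdE 1 (lexx 1); lra.
set c1 := Num.min alpha (E 1); set c2 := E 1 + beta.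
have c10 : 0 < c1 by rewrite lt_min alpha0 E10.
have c20 : 0 < c2 by rewrite ltr_wpDr.
exists (`|ln c1| + `|ln c2|) => t t1.
have t0 : 0 < t by apply: lt_le_trans t1.
have c1a : c1 <= alpha by rewrite ge_min lexx.
have c1E : c1 <= E 1 by rewrite ge_min lexx orbT.
have Et_lo : c1 * t <= E t by have := lo t t1; nra.
have Et_up : E t <= c2 * t.
  have : 0 <= E 1 * (t - 1) by rewrite mulr_ge0 ?subr_ge0 // ltW.
  by have := up t t1; rewrite /c2 mulrDl mulrBr mulr1; lra.
have Et0 : 0 < E t by apply: lt_le_trans Et_lo; rewrite mulr_gt0.
have : ln (c1 * t) <= ln (E t) by rewrite ler_ln ?posrE ?mulr_gt0.
have : ln (E t) <= ln (c2 * t) by rewrite ler_ln ?posrE ?mulr_gt0.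
rewrite !lnM ?posrE //.
have := normr_ge0 (ln c1); have := normr_ge0 (ln c2).
have := ler_norm (ln c2); have := ler_norm (- ln c1); rewrite normrN.
by rewrite ler_norml => *; apply/andP; split; lra.
Qed.

End RealDerivatives.

Section BoundedOnRay.
Context {R : realType}.

Definition bounded_ge1 {V : normedModType R} (g : R -> V) :=
  exists C, forall t : R, 1 <= t -> `|g t| <= C.

Context {V : normedModType R}.
Implicit Types g h : R -> V.

Lemma bounded_ge1_eq {g h} : bounded_ge1 h ->
  (forall t : R, 1 <= t -> g t = h t) -> bounded_ge1 g.
Proof. by move=> [C hC] gh; exists C => t t1; rewrite gh // hC. Qed.

Lemma bounded_ge1_cst (v : V) : bounded_ge1 (fun=> v).
Proof. by exists `|v|. Qed.

Lemma bounded_ge1D {g h} : bounded_ge1 g -> bounded_ge1 h -> bounded_ge1 (fun t => g t + h t).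
Proof.
move=> [Cg hg] [Ch hh]; exists (Cg + Ch) => t t1.
by apply: le_trans (ler_normD _ _) _; apply: lerD; [apply: hg|apply: hh].
Qed.

Lemma bounded_ge1N {g} : bounded_ge1 g -> bounded_ge1 (fun t => - g t).
Proof. by move=> [C hg]; exists C => t t1; rewrite normrN; apply: hg. Qed.

Lemma bounded_ge1Z (c : R) {g} : bounded_ge1 g -> bounded_ge1 (fun t => c *: g t).
Proof.
move=> [C hg]; exists (`|c| * C) => t t1.
by rewrite normrZ ler_wpM2l // hg.
Qed.

Lemma bounded_ge1Zl {g : R -> R} (v : V) : bounded_ge1 g -> bounded_ge1 (fun t => g t *: v).
Proof.
move=> [C hg]; exists (C * `|v|) => t t1.
by rewrite normrZ ler_wpM2r // hg.
Qed.

Lemma bounded_ge1_sum {I : finType} {g : I -> R -> V} :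
  (forall i, bounded_ge1 (g i)) -> bounded_ge1 (fun t => \sum_i g i t).
Proof.
move=> /choice [C hC]; exists (\sum_i C i) => t t1.
by apply: le_trans (ler_norm_sum _ _ _) _; apply: ler_sum => i _; apply: hC.
Qed.

Lemma bounded_ge1_cvg_invln (X : R -> V) (L : V) :
  bounded_ge1 (fun t => X t - ln t *: L) -> (ln t)^-1 *: X t @[t --> +oo] --> L.
Proof.
move=> [C HC]; apply/cvgrPdist_lt => eps eps0.
set A := (`|C| + 1) / eps.
have A0 : 0 < A by rewrite divr_gt0 // ltr_wpDl.
have Areal : expR A \is Num.real by rewrite num_real.
near=> t.
have ht : expR A < t by near: t; exact: nbhs_pinfty_gt.
have t1 : 1 < t by apply: le_lt_trans ht; rewrite -expR0 ler_expR ltW.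
have lnt : A < ln t by rewrite -[A]expRK ltr_ln ?posrE ?expR_gt0 // (lt_trans ltr01).
have lnt0 : 0 < ln t by apply: lt_trans lnt.
rewrite -[L]scale1r -[X in X *: L](mulVf (lt0r_neq0 lnt0)) -scalerA -scalerBr normrZ.
rewrite normrV ?unitfE ?lt0r_neq0 // gtr0_norm // -normrN opprB ltr_pdivrMl //.
apply: le_lt_trans (HC t (ltW t1)) _; apply: le_lt_trans (ler_norm C) _.
by rewrite /A ltr_pdivrMr // in lnt; lra.
Unshelve. all: end_near.
Qed.

End BoundedOnRay.

Section Softmax.
Context {R : realType} {M : nat}.
Implicit Types v : 'I_M -> R.

(* An index [j : 'I_M] passed to a lemma below only witnesses [M > 0]. *)

Definition softmax v (y : 'I_M) : R := expR (v y) / \sum_(k < M) expR (v k).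

Lemma sum_delta (j : 'I_M) (F : 'I_M -> R) : \sum_(i < M) (i == j)%:R * F i = F j.
Proof. by rewrite (bigD1 j) //= eqxx mul1r big1 ?addr0 // => i /negbTE ->; rewrite mul0r. Qed.

Lemma sum_delta1 (j : 'I_M) : \sum_(i < M) (i == j)%:R = 1 :> R.
Proof. by rewrite -[RHS](sum_delta j (fun=> 1)); apply: eq_bigr => i _; rewrite mulr1. Qed.

Lemma sum_expR_gt0 (j : 'I_M) v : 0 < \sum_(k < M) expR (v k).
Proof.
rewrite (bigD1 j) //=; apply: ltr_pwDl; first exact: expR_gt0.
by apply: sumr_ge0 => k _; apply: expR_ge0.
Qed.

Lemma softmax_ge0 v y : 0 <= softmax v y.
Proof. by rewrite divr_ge0 // ?expR_ge0 // ltW // (sum_expR_gt0 y). Qed.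

Lemma sum_softmax (j : 'I_M) v : \sum_(y < M) softmax v y = 1.
Proof. by rewrite -mulr_suml divff // lt0r_neq0 // (sum_expR_gt0 j). Qed.

Lemma softmax_le1 v y : softmax v y <= 1.
Proof.
rewrite ler_pdivrMr ?(sum_expR_gt0 y) // mul1r (bigD1 y) //= lerDl.
by apply: sumr_ge0 => k _; apply: expR_ge0.
Qed.

Lemma softmax_invE v y :
  softmax v y = (1 + \sum_(k < M | k != y) expR (v k - v y))^-1.
Proof.
have ey0 : 0 < expR (v y) by apply: expR_gt0.
have -> : \sum_(k < M | k != y) expR (v k - v y) =
    (\sum_(k < M | k != y) expR (v k)) / expR (v y).
  by rewrite mulr_suml; apply: eq_bigr => k _; rewrite expRB.
have T0 : 0 <= \sum_(k < M | k != y) expR (v k) by apply: sumr_ge0 => k _; apply: expR_ge0.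
rewrite /softmax (bigD1 y) //=; field.
by rewrite !lt0r_neq0 ?ltr_pwDl.
Qed.

Lemma ln_softmax v y : ln (softmax v y) = v y - ln (\sum_(k < M) expR (v k)).
Proof. by rewrite ln_div ?posrE ?expR_gt0 ?(sum_expR_gt0 y) // expRK. Qed.

Lemma is_derive_ln_sum_expR (j : 'I_M) (c c' : 'I_M -> R) (x : R) :
  is_derive x 1 (fun h => ln (\sum_(k < M) expR (c k + h * c' k)))
    (\sum_(k < M) softmax (fun k => c k + x * c' k) k * c' k).
Proof.
apply: is_derive_eq.
  apply: is_derive_ln_comp (sum_expR_gt0 j _) _.
  exact: is_derive_sum_fun (fun k => is_derive_expR_comp (is_derive_affine _ _ _)).
by rewrite /= mulr_sumr; apply: eq_bigr => k _; rewrite /softmax mulrCA mulrA mulrC.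
Qed.

End Softmax.

Section SoftmaxFlow.
Context {R : realType} {M : nat} {a : R} {f : 'I_M} {z : 'I_M -> R -> R}.
Hypothesis a_gt0 : 0 < a.
Hypothesis z_flow : forall t : R, 0 < t -> forall y,
  is_derive t 1 (z y) (a * ((y == f)%:R - softmax (z^~ t) y)).

Lemma sum_logits_const {t : R} : 0 < t -> \sum_(y < M) z y t = \sum_(y < M) z y 1.
Proof.
move=> t0; apply: (@derive0_constant _ (fun s => \sum_(y < M) z y s)) => // s s0.
apply: is_derive_eq (is_derive_sum_fun (z_flow _ s0)) _.
by rewrite -mulr_sumr sumrB (sum_softmax f) sum_delta1 subrr mulr0.
Qed.

Lemma gap_nondecreasing y {s t : R} : 0 < s -> s <= t ->
  z f s - z y s <= z f t - z y t.
Proof.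
case: (eqVneq y f) => [-> | yf s0 st]; first by rewrite !subrr.
pose dgap t := a * (1 - softmax (z^~ t) f) + a * softmax (z^~ t) y.
apply: (@derive_ge0_nondecreasing _ (fun t => z f t - z y t) dgap s) => // u su.
  have u0 := lt_le_trans s0 su.
  apply: is_derive_eq (is_deriveB (z_flow _ u0 f) (z_flow _ u0 y)) _.
  by rewrite eqxx (negbTE yf) /dgap /=; ring.
have a_ge0 := ltW a_gt0.
by rewrite /dgap addr_ge0 // mulr_ge0 // ?subr_ge0 ?softmax_le1 ?softmax_ge0.
Qed.

Lemma nontarget_gap_contracts {y y' : 'I_M} {s t : R} :
  y != f -> y' != f -> 0 < s -> s <= t -> `|z y' t - z y t| <= `|z y' s - z y s|.
Proof.
move=> yf y'f s0 st; pose D t := z y' t - z y t.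
pose dD t := a * (softmax (z^~ t) y - softmax (z^~ t) y').
have hD u : s <= u -> is_derive u 1 D (dD u).
  move=> su; have u0 := lt_le_trans s0 su.
  apply: is_derive_eq (is_deriveB (z_flow _ u0 y') (z_flow _ u0 y)) _.
  by rewrite (negbTE yf) (negbTE y'f) /dD; ring.
have D_dD_le0 u : D u * dD u <= 0.
  set S := \sum_(k < M) expR (z k u).
  have -> : D u * dD u = a / S * ((z y' u - z y u) * (expR (z y u) - expR (z y' u))).
    by rewrite /D /dD /softmax -/S; ring.
  apply: mulr_ge0_le0; first by rewrite divr_ge0 ?ltW ?(sum_expR_gt0 f).
  case: (leP (z y u) (z y' u)) => h.
    by rewrite mulr_ge0_le0 ?subr_ge0 ?subr_le0 ?ler_expR.
  by rewrite mulr_le0_ge0 ?subr_ge0 ?subr_le0 ?ler_expR ?ltW.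
have : - (D s * D s) <= - (D t * D t).
  apply: (@derive_ge0_nondecreasing _ (fun u => - (D u * D u))
    (fun u => - (D u *: dD u + D u *: dD u)) s) => //.
    by move=> u su; exact: is_deriveN (is_deriveM (hD u su) (hD u su)).
  by move=> u _; rewrite oppr_ge0 -mulr2n; apply: mulrn_wle0; apply: D_dD_le0.
rewrite lerN2 -!expr2 -!(real_normK (num_real (D _))).
by rewrite ler_pXn2r // nnegrE normr_ge0.
Qed.

Lemma target_softmax_nondecreasing {s t : R} : 0 < s -> s <= t ->
  softmax (z^~ s) f <= softmax (z^~ t) f.
Proof.
move=> s0 st; have T_ge0 r : 0 <= \sum_(k < M | k != f) expR (z k r - z f r).
  by apply: sumr_ge0 => k _; apply: expR_ge0.
rewrite !softmax_invE lef_pV2 ?posrE ?ltr_wpDr // lerD2l; apply: ler_sum => k _; rewrite ler_expR.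
by have := gap_nondecreasing k s0 st; lra.
Qed.

Lemma exp_gap_derive {y : 'I_M} {t : R} : y != f -> 0 < t ->
  is_derive t 1 (fun s => expR (z f s - z y s))
    (a * softmax (z^~ t) f * (1 + \sum_(k < M | k != f) expR (z k t - z y t))).
Proof.
move=> yf t0; apply: is_derive_eq.
  exact: is_derive_expR_comp (is_deriveB (z_flow _ t0 f) (z_flow _ t0 y)).
have -> : \sum_(k < M | k != f) expR (z k t - z y t) =
    (\sum_(k < M | k != f) expR (z k t)) / expR (z y t).
  by rewrite mulr_suml; apply: eq_bigr => k _; rewrite expRB.
move: (sum_expR_gt0 f (z^~ t)).
rewrite eqxx (negbTE yf) /softmax expRB (bigD1 f) //= => S0.
by field; rewrite !lt0r_neq0 ?expR_gt0.
Qed.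

Lemma gap_ln_bounded {y : 'I_M} : y != f -> bounded_ge1 (fun t => z f t - z y t - ln t).
Proof.
move=> yf.
pose dE t := a * softmax (z^~ t) f * (1 + \sum_(k < M | k != f) expR (z k t - z y t)).
pose alpha := a * softmax (z^~ 1) f.
pose beta := a * (1 + \sum_(k < M | k != f) expR `|z k 1 - z y 1|).
have alpha0 : 0 < alpha by rewrite mulr_gt0 // divr_gt0 ?expR_gt0 ?(sum_expR_gt0 f).
have dE_bounds t : 1 <= t -> alpha <= dE t <= beta.
  move=> t1; have t0 := lt_le_trans ltr01 t1.
  have T0 : 0 <= \sum_(k < M | k != f) expR (z k t - z y t).
    by apply: sumr_ge0 => k _; apply: expR_ge0.
  apply/andP; split.
    rewrite /dE -[alpha]mulr1; apply: ler_pM => //.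
    - by rewrite mulr_ge0 ?softmax_ge0 ?ltW.
    - by rewrite ler_pM2l // target_softmax_nondecreasing.
    - by rewrite lerDl.
  rewrite /dE /beta -mulrA ler_pM2l // -[X in _ <= X]mul1r.
  apply: ler_pM; rewrite ?softmax_ge0 ?addr_ge0 ?softmax_le1 // lerD2l.
  apply: ler_sum => k kf; rewrite ler_expR.
  exact: le_trans (ler_norm _) (nontarget_gap_contracts yf kf ltr01 t1).
have [C hC] := @ln_growth_linear _ (fun t => expR (z f t - z y t)) dE alpha beta
  alpha0 (expR_gt0 _) (fun t t1 => exp_gap_derive yf (lt_le_trans ltr01 t1)) dE_bounds.
by exists C => t t1; move: (hC t t1); rewrite expRK.
Qed.

Lemma logit_ln_bounded y :
  bounded_ge1 (fun t => z y t - ((y == f)%:R - M%:R^-1) * ln t).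
Proof.
have M0 : M%:R != 0 :> R by rewrite pnatr_eq0 -lt0n (leq_ltn_trans (leq0n f) (ltn_ord f)).
pose eps k t := z f t - z k t - (1 - (k == f)%:R) * ln t.
have eps_bounded k : bounded_ge1 (eps k).
  case: (eqVneq k f) => [->|kf]; last first.
    by apply: bounded_ge1_eq (gap_ln_bounded kf) _ => t _; rewrite /eps (negbTE kf) subr0 mul1r.
  by apply: bounded_ge1_eq (bounded_ge1_cst 0) _ => t _; rewrite /eps eqxx /= !subrr mul0r subr0.
pose K := \sum_(k < M) z k 1.
(* z_y = (sum_k z_k + sum_k (z_f - z_k)) / M - (z_f - z_y), and sum_k z_k = K. *)
have : bounded_ge1 (fun t => M%:R^-1 *: (K + \sum_(k < M) eps k t) - eps y t).
  apply: bounded_ge1D (bounded_ge1N (eps_bounded y)).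
  exact: bounded_ge1Z (bounded_ge1D (bounded_ge1_cst _) (bounded_ge1_sum eps_bounded)).
move/bounded_ge1_eq; apply=> t t1; rewrite /K -(sum_logits_const (lt_le_trans ltr01 t1)) /eps.
rewrite !sumrB sumr_const card_ord -mulr_suml sumrB sumr_const card_ord sum_delta1.
by rewrite -mulr_natl -[M%:R^-1 *: _]/(M%:R^-1 * _); field.
Qed.

End SoftmaxFlow.

Section InnerProducts.
Context {R : realType} {d : nat}.
Implicit Types (v w : 'cV[R]_d) (A B V : 'M[R]_d).

Lemma dotvC v w : dotv v w = dotv w v.
Proof. by apply: eq_bigr => k _; rewrite mulrC. Qed.

Lemma dotvDr v w1 w2 : dotv v (w1 + w2) = dotv v w1 + dotv v w2.
Proof. by rewrite /dotv -big_split; apply: eq_bigr => k _; rewrite mxE mulrDr. Qed.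

Lemma dotvZr v c w : dotv v (c *: w) = c * dotv v w.
Proof. by rewrite /dotv mulr_sumr; apply: eq_bigr => k _; rewrite mxE mulrCA. Qed.

Lemma dotv0r v : dotv v 0 = 0.
Proof. by rewrite /dotv big1 // => k _; rewrite mxE mulr0. Qed.

Lemma dotvBr v w1 w2 : dotv v (w1 - w2) = dotv v w1 - dotv v w2.
Proof. by rewrite dotvDr -scaleN1r dotvZr mulN1r. Qed.

Lemma dotv_sumr v n (F : 'I_n -> 'cV[R]_d) :
  dotv v (\sum_(i < n) F i) = \sum_(i < n) dotv v (F i).
Proof. exact: (big_morph _ (dotvDr v) (dotv0r v)). Qed.

Lemma dotv_eq0 v : dotv v v = 0 -> v = 0.
Proof.
move=> /psumr_eq0P vv0; apply/matrixP => i j; rewrite (ord1 j) mxE.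
have sq_ge0 k : true -> 0 <= v k 0 * v k 0 by rewrite -expr2 sqr_ge0.
by have /eqP := vv0 sq_ge0 i isT; rewrite mulf_eq0 orbb => /eqP.
Qed.

Lemma frobDl A B V : frob (A + B) V = frob A V + frob B V.
Proof.
rewrite /frob -big_split; apply: eq_bigr => i _.
by rewrite -big_split; apply: eq_bigr => j _; rewrite mxE mulrDl.
Qed.

Lemma frobZl c A V : frob (c *: A) V = c * frob A V.
Proof.
rewrite /frob mulr_sumr; apply: eq_bigr => i _.
by rewrite mulr_sumr; apply: eq_bigr => j _; rewrite mxE mulrA.
Qed.

Lemma frob0l V : frob 0 V = 0.
Proof. by rewrite -(scale0r 0) frobZl mul0r. Qed.

Lemma frobNl A V : frob (- A) V = - frob A V.
Proof. by rewrite -scaleN1r frobZl mulN1r. Qed.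

Lemma frob_suml n (F : 'I_n -> 'M[R]_d) V :
  frob (\sum_(i < n) F i) V = \sum_(i < n) frob (F i) V.
Proof. exact: (big_morph _ (fun A B => frobDl A B V) (frob0l V)). Qed.

Lemma frob_tensorl (a b : 'cV[R]_d) A : frob (tensor a b) A = dotv a (A *m b).
Proof.
apply: eq_bigr => i _; rewrite mxE mulr_sumr; apply: eq_bigr => j _.
by rewrite /tensor !mxE big_ord1 !mxE mulrAC -mulrA.
Qed.

Lemma frob_deltar A i j : frob A (delta_mx i j) = A i j.
Proof.
rewrite /frob (bigD1 i) //= (bigD1 j) //= !mxE !eqxx mulr1.
rewrite big1 ?addr0 => [|k /negbTE ki]; last by rewrite mxE ki andbF mulr0.
by rewrite big1 ?addr0 // => k /negbTE ki; rewrite big1 // => l _; rewrite mxE ki mulr0.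
Qed.

Lemma frob_inj A B : (forall V, frob A V = frob B V) -> A = B.
Proof. by move=> AB; apply/matrixP => i j; rewrite -!frob_deltar AB. Qed.

Lemma tensor_mulmx (a b w : 'cV[R]_d) : tensor a b *m w = dotv b w *: a.
Proof.
apply/matrixP => i j; rewrite (ord1 j) !mxE /dotv mulr_suml.
by apply: eq_bigr => k _; rewrite /tensor !mxE big_ord1 !mxE -mulrA mulrC.
Qed.

End InnerProducts.

Section MatrixPaths.
Context {R : realType} {d : nat}.

Lemma is_derive_mx_entry {W : R -> 'M[R]_d} {t : R} {D : 'M[R]_d} i j :
  is_derive t 1 W D -> is_derive t 1 (fun s => W s i j) (D i j).
Proof.
move=> [dW <-]; apply: DeriveDef; first by move/derivable_mxP: dW; apply.
by rewrite (derive_mx dW) mxE.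
Qed.

Lemma is_derive_frobr {W : R -> 'M[R]_d} {t : R} {D : 'M[R]_d} (c : 'M[R]_d) :
  is_derive t 1 W D -> is_derive t 1 (fun s => frob c (W s)) (frob c D).
Proof.
move=> dW; apply: is_derive_sum_fun => i; apply: is_derive_sum_fun => j.
exact: (is_deriveMl _ (is_derive_mx_entry i j dW)).
Qed.

End MatrixPaths.

Lemma is_derive_along {R : realType} {V W : normedModType R} (F : V -> W) (a v : V) (D : W) :
  is_derive (0 : R) 1 (fun h : R => F (h *: v + a)) D -> is_derive a v F D.
Proof.
move=> [hd hv].
have E : (fun h : R => h^-1 *: ((F \o shift a) (h *: v) - F a)) =
  (fun h : R => h^-1 *:
    (((fun h : R => F (h *: v + a)) \o shift 0) (h *: 1) - F (0 *: v + a))).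
  by apply: funext => h /=; rewrite addr0 scale0r add0r [_%:A]mulr1.
by apply: DeriveDef; [rewrite /derivable E | rewrite /derive E].
Qed.

Section LossGradient.
Context {R : realType} {N M d : nat} (e : 'I_N -> 'cV[R]_d) (u : 'I_M -> 'cV[R]_d)
  (fstar : 'I_N -> 'I_M) (p : 'I_N -> R).

Definition logit (W : 'M[R]_d) (y : 'I_M) (x : 'I_N) : R := dotv (u y) (W *m e x).

Definition loss_grad (W : 'M[R]_d) : 'M[R]_d := - \sum_(x < N) \sum_(y < M)
  (p x * ((y == fstar x)%:R - pW e u W y x)) *: tensor (u y) (e x).

Lemma oppr_loss_grad W : - loss_grad W = \sum_(x < N) \sum_(y < M)
  (p x * ((y == fstar x)%:R - pW e u W y x)) *: tensor (u y) (e x).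
Proof. exact: opprK. Qed.

Lemma logit_frob W y x : logit W y x = frob (tensor (u y) (e x)) W.
Proof. by rewrite frob_tensorl. Qed.

Lemma logitD A B y x : logit (A + B) y x = logit A y x + logit B y x.
Proof. by rewrite /logit mulmxDl dotvDr. Qed.

Lemma logitZ c A y x : logit (c *: A) y x = c * logit A y x.
Proof. by rewrite /logit -scalemxAl dotvZr. Qed.

Lemma logit_sum n (F : 'I_n -> 'M[R]_d) y x :
  logit (\sum_(i < n) F i) y x = \sum_(i < n) logit (F i) y x.
Proof.
apply: (big_morph (logit^~ y ^~ x) (fun A B => logitD A B y x)).
by rewrite /logit mul0mx dotv0r.
Qed.

Lemma logit_affine (h : R) V W y x :
  logit (h *: V + W) y x = logit W y x + h * logit V y x.
Proof. by rewrite logitD logitZ addrC. Qed.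

Lemma is_derive_logit {W : R -> 'M[R]_d} {t : R} {D : 'M[R]_d} y x :
  is_derive t 1 W D -> is_derive t 1 (fun s => logit (W s) y x) (logit D y x).
Proof.
move=> dW; rewrite logit_frob; under [fun s => _]funext do rewrite logit_frob.
exact: is_derive_frobr.
Qed.

Lemma lossE W : loss e u fstar p W =
  - \sum_(x < N) p x * (logit W (fstar x) x - ln (\sum_(k < M) expR (logit W k x))).
Proof. by congr (- _); apply: eq_bigr => x _; rewrite [ln _]ln_softmax. Qed.

Lemma loss_is_derive W V : is_derive W V (loss e u fstar p) (frob (loss_grad W) V).
Proof.
apply: is_derive_along.
have -> : (fun h : R => loss e u fstar p (h *: V + W)) = (fun h => - \sum_(x < N) p x *
    ((logit W (fstar x) x + h * logit V (fstar x) x) -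
      ln (\sum_(k < M) expR (logit W k x + h * logit V k x)))).
  apply: funext => h; rewrite lossE; congr (- _); apply: eq_bigr => x _.
  by rewrite logit_affine; under eq_bigr do rewrite logit_affine.
have dx x : is_derive (0 : R) 1 (fun h : R => p x *
    ((logit W (fstar x) x + h * logit V (fstar x) x) -
      ln (\sum_(k < M) expR (logit W k x + h * logit V k x))))
    (p x *: (logit V (fstar x) x -
      \sum_(k < M) softmax (fun k => logit W k x + 0 * logit V k x) k * logit V k x)).
  exact: is_deriveZ (is_deriveB (is_derive_affine _ _ _) (is_derive_ln_sum_expR (fstar x) _ _ _)).
apply: is_derive_eq (is_deriveN (is_derive_sum_fun dx)) _.
rewrite /loss_grad frobNl frob_suml; congr (- _); apply: eq_bigr => x _.
have -> : (fun k => logit W k x + 0 * logit V k x) = logit W ^~ x.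
  by apply: funext => k; rewrite mul0r addr0.
rewrite frob_suml -[_ *: _]/(_ * _).
under [in RHS]eq_bigr do rewrite frobZl frob_tensorl -/(logit V _ x) -mulrA mulrBl.
by rewrite -mulr_sumr sumrB sum_delta.
Qed.

Lemma is_gradient_lossE W G : is_gradient (loss e u fstar p) W G -> G = loss_grad W.
Proof.
move=> [dL dLE]; apply: frob_inj => V.
by have [_ <-] := loss_is_derive W V; rewrite -dLE -deriveE.
Qed.

End LossGradient.

Section DiffSpanProjection.
Context {R : realType} {M d : nat} {u : 'I_M -> 'cV[R]_d}.

Lemma in_diff_spanB {v w} : in_diff_span u v -> in_diff_span u w -> in_diff_span u (v - w).
Proof.
move=> [cv ->] [cw ->]; exists (fun i j => cv i j - cw i j).
rewrite -sumrB; apply: eq_bigr => i _; rewrite -sumrB.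
by apply: eq_bigr => j _; rewrite scalerBl.
Qed.

Lemma orth_proj_diff_spanE (Pi : 'cV[R]_d -> 'cV[R]_d) v w :
  is_orth_proj_diff_span u Pi -> in_diff_span u w ->
  (forall w', in_diff_span u w' -> dotv (v - w) w' = 0) -> Pi v = w.
Proof.
move=> hPi w_span w_orth; have [Pi_span Pi_orth] := hPi v.
have D_span := in_diff_spanB Pi_span w_span.
apply/eqP; rewrite -subr_eq0; apply/eqP/dotv_eq0.
rewrite [X in dotv X](_ : _ = (v - w) - (v - Pi v)); last first.
  by rewrite opprB [RHS]addrC addrA subrK.
by rewrite dotvC dotvBr !(dotvC (Pi v - w)) w_orth // Pi_orth // subrr.
Qed.

Hypothesis hu : orthonormal_vecs u.

Lemma orth_proj_diff_span_vec {Pi : 'cV[R]_d -> 'cV[R]_d} y0 :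
  is_orth_proj_diff_span u Pi -> Pi (u y0) = u y0 - M%:R^-1 *: \sum_(y < M) u y.
Proof.
move=> hPi; have M0 : M%:R != 0 :> R.
  by rewrite pnatr_eq0 -lt0n (leq_ltn_trans (leq0n y0) (ltn_ord y0)).
apply: orth_proj_diff_spanE => //.
  exists (fun i j => (i == y0)%:R / M%:R).
  rewrite [RHS](bigD1 y0) //= [X in _ = _ + X]big1 ?addr0 => [|i /negbTE ->]; last first.
    by apply: big1 => j _; rewrite mul0r scale0r.
  rewrite eqxx mul1r -scaler_sumr sumrB sumr_const card_ord scalerBr.
  by rewrite -scalerMnr scalerMnl -(mulr_natr M%:R^-1) mulVf // scale1r.
have sum_dot k : dotv (\sum_(y < M) u y) (u k) = 1.
  rewrite dotvC dotv_sumr (bigD1 k) //= hu eqxx big1 ?addr0 // => y /negbTE yk.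
  by rewrite hu eq_sym yk.
move=> _ [c ->]; rewrite opprB addrC subrK dotv_sumr big1 // => i _.
rewrite dotv_sumr big1 // => j _.
by rewrite dotvZr dotvC dotvZr dotvC dotvBr !sum_dot subrr !mulr0.
Qed.

Lemma orth_proj_diff_span_tensor {Pi : 'cV[R]_d -> 'cV[R]_d} y0 (b : 'cV[R]_d) :
  is_orth_proj_diff_span u Pi ->
  tensor (Pi (u y0)) b = \sum_(y < M) ((y == y0)%:R - M%:R^-1) *: tensor (u y) b.
Proof.
move=> hPi; rewrite (orth_proj_diff_span_vec y0 hPi) /tensor mulmxBl -scalemxAl mulmx_suml.
under [RHS]eq_bigr do rewrite scalerBl.
rewrite sumrB -scaler_sumr; congr (_ - _).
by rewrite (bigD1 y0) //= eqxx scale1r big1 ?addr0 // => y /negbTE ->; rewrite scale0r.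
Qed.

End DiffSpanProjection.

Section OrthonormalFlow.
Context {R : realType} {N M d : nat} {e : 'I_N -> 'cV[R]_d} {u : 'I_M -> 'cV[R]_d}
  {fstar : 'I_N -> 'I_M} {p : 'I_N -> R}.
Hypotheses (he : orthonormal_vecs e) (hu : orthonormal_vecs u).
Local Notation logit := (logit e u).
Local Notation loss_grad := (loss_grad e u fstar p).
Local Notation T y x := (tensor (u y) (e x)).

Lemma logit_tensor y' x' y x : logit (T y' x') y x = (x' == x)%:R * (y == y')%:R.
Proof. by rewrite /logit tensor_mulmx dotvZr he hu. Qed.

Lemma logit_loss_grad W y x :
  logit (- loss_grad W) y x = p x * ((y == fstar x)%:R - softmax (logit W ^~ x) y).
Proof.
rewrite oppr_loss_grad logit_sum (bigD1 x) //= [X in _ + X]big1 ?addr0 => [|x' x'x]; last first.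
  by rewrite logit_sum big1 // => y' _; rewrite logitZ logit_tensor (negbTE x'x) mul0r mulr0.
rewrite logit_sum (bigD1 y) //= [X in _ + X]big1 ?addr0 => [|y' y'y]; last first.
  by rewrite logitZ logit_tensor eqxx (eq_sym y) (negbTE y'y) !mulr0.
by rewrite logitZ logit_tensor !eqxx /= mulr1n !mulr1.
Qed.

Lemma loss_grad_tensorE W :
  - loss_grad W = \sum_(x < N) \sum_(y < M) logit (- loss_grad W) y x *: T y x.
Proof.
rewrite {1}oppr_loss_grad; apply: eq_bigr => x _.
by apply: eq_bigr => y _; rewrite logit_loss_grad.
Qed.

Context {W : R -> 'M[R]_d}.
Hypothesis W_flow : forall t : R, 0 < t -> is_derive t 1 W (- loss_grad (W t)).

Lemma logit_flow x (t : R) : 0 < t -> forall y,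
  is_derive t 1 (fun s => logit (W s) y x)
    (p x * ((y == fstar x)%:R - softmax (fun k => logit (W t) k x) y)).
Proof. by move=> t0 y; rewrite -logit_loss_grad; apply: is_derive_logit; apply: W_flow. Qed.

Lemma flow_residual_const {t : R} : 0 < t ->
  W t - \sum_(x < N) \sum_(y < M) logit (W t) y x *: T y x =
  W 1 - \sum_(x < N) \sum_(y < M) logit (W 1) y x *: T y x.
Proof.
move=> t0; apply/matrixP => i j.
pose h s := W s i j - \sum_(x < N) \sum_(y < M) T y x i j * logit (W s) y x.
have hE s : (W s - \sum_(x < N) \sum_(y < M) logit (W s) y x *: T y x) i j = h s.
  rewrite /h !mxE summxE; congr (_ - _); apply: eq_bigr => x _.
  by rewrite summxE; apply: eq_bigr => y _; rewrite mxE mulrC.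
rewrite !hE; apply: (@derive0_constant _ h) => // s s0.
have dW := W_flow _ s0.
apply: is_derive_eq.
  apply: is_deriveB (is_derive_mx_entry i j dW) _.
  apply: is_derive_sum_fun => x; apply: is_derive_sum_fun => y.
  exact: (is_deriveMl _ (is_derive_logit e u y x dW)).
rewrite [in X in X - _]loss_grad_tensorE summxE -sumrB big1 // => x _.
by rewrite summxE -sumrB big1 // => y _; rewrite mxE mulrC subrr.
Qed.

End OrthonormalFlow.

Theorem theorem3 (R : realType) (N M d : nat)
  (hN : (2 <= N)%N) (hM : (2 <= M)%N) (hd : (maxn N M <= d)%N)
  (e : 'I_N -> 'cV[R]_d) (u : 'I_M -> 'cV[R]_d)
  (fstar : 'I_N -> 'I_M) (p : 'I_N -> R)
  (hp_sum : \sum_(x < N) p x = 1)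
  (he : orthonormal_vecs e) (hu : orthonormal_vecs u)
  (hp_pos : forall x, 0 < p x)
  (Pi : 'cV[R]_d -> 'cV[R]_d) (hPi : is_orth_proj_diff_span u Pi)
  (W0 : 'M[R]_d) (W : R -> 'M[R]_d)
  (hW : is_gradient_flow (loss e u fstar p) W0 W) :
  exists kappa : R, 0 < kappa /\
    ((ln t)^-1 *: W t @[t --> +oo] -->
       kappa *: \sum_(x < N) tensor (Pi (u (fstar x))) (e x)).
Proof.
have W_flow (t : R) : 0 < t -> is_derive t 1 W (- loss_grad e u fstar p (W t)).
  by move=> t0; have [_ [_ /(_ t t0) [G [/is_gradient_lossE <-]]]] := hW.
pose T y x := tensor (u y) (e x).
pose c y x : R := (y == fstar x)%:R - M%:R^-1.
have logit_bounded x y : bounded_ge1 (fun t => logit e u (W t) y x - c y x * ln t).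
  exact: logit_ln_bounded (hp_pos x) (logit_flow he hu W_flow x) y.
exists 1; split=> //; rewrite scale1r; apply: bounded_ge1_cvg_invln.
pose Wres := W 1 - \sum_(x < N) \sum_(y < M) logit e u (W 1) y x *: T y x.
apply: bounded_ge1_eq (bounded_ge1D (bounded_ge1_cst Wres) (bounded_ge1_sum (fun x =>
  bounded_ge1_sum (fun y => bounded_ge1Zl (T y x) (logit_bounded x y))))) _ => t t1.
rewrite /Wres -(flow_residual_const he hu W_flow (lt_le_trans ltr01 t1)) -addrA.
congr (_ + _); rewrite scaler_sumr -sumrN addrC -sumrB; apply: eq_bigr => x _.
rewrite (orth_proj_diff_span_tensor hu _ _ hPi) scaler_sumr -sumrN -sumrB.
by apply: eq_bigr => y _; rewrite scalerA -scalerBl addrAC subrr add0r scaleNr mulrC.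
Qed.
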